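(* For every $n\ge3$ and $d=\binom n2$ there is a $d$-dimensional $0/1$-polytope in $\mathbb{R}^d$ that is $3$-neighborly (every three distinct vertices span a triangular face) and has more than $2^{\sqrt{2d}-1/2}$ vertices.
   Context: A $0/1$-polytope is the convex hull of a subset of $\{0,1\}^d$. *)

From HB Require Import structures.
From mathcomp Require Import all_boot all_order all_algebra.
From mathcomp Require Import reals exp.
Set Implicit Arguments. Unset Strict Implicit. Unset Printing Implicit Defensive.
Import Order.TTheory GRing.Theory Num.Theory.
Local Open Scope ring_scope.

Section Polytopes.
Variables (R : realType) (d : nat).

Definition dotp (x y : 'rV[R]_d) : R := \sum_(i < d) x 0 i * y 0 i.

Definition pt01 (b : {ffun 'I_d -> bool}) : 'rV[R]_d := \row_i (b i)%:R.

Definition conv (S : seq 'rV[R]_d) (x : 'rV[R]_d) : Prop :=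
  exists l : 'I_(size S) -> R,
    (forall i, 0 <= l i) /\ \sum_i l i = 1 /\
    x = \sum_i l i *: S`_i.

(* F is a face of P : F = P ∩ H for a supporting hyperplane H = {c.x = b}
   with P ⊆ {c.x <= b} (c = 0 allowed, giving P itself as a face) *)
Definition is_face (P F : 'rV[R]_d -> Prop) : Prop :=
  exists (c : 'rV[R]_d) (b : R),
    (forall x, P x -> dotp c x <= b) /\
    (forall x, F x <-> (P x /\ dotp c x = b)).

Definition is_vertex (P : 'rV[R]_d -> Prop) (p : 'rV[R]_d) : Prop :=
  is_face P (fun x => x = p).

Definition aff_dim (S : seq 'rV[R]_d) : nat :=
  \rank (\matrix_(i < size S) (S`_i - S`_0)).

Definition pts01 (V : {set {ffun 'I_d -> bool}}) : seq 'rV[R]_d :=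
  map pt01 (enum V).

Definition poly01 (V : {set {ffun 'I_d -> bool}}) : 'rV[R]_d -> Prop :=
  conv (pts01 V).

End Polytopes.

Arguments pt01 R {d} b.
Arguments pts01 R {d} V.
Arguments poly01 R {d} V.
Arguments conv {R d} S x.
Arguments is_face {R d} P F.
Arguments is_vertex {R d} P p.
Arguments aff_dim {R d} S.

From HB Require Import structures.
From mathcomp Require Import all_boot all_order all_algebra.
From mathcomp Require Import reals exp.
From mathcomp Require Import ring lra.
Set Implicit Arguments. Unset Strict Implicit. Unset Printing Implicit Defensive.
Import Order.TTheory GRing.Theory Num.Theory.
Local Open Scope ring_scope.

(* The polytope is the cut polytope of the complete graph K_n: its vertices are the cut vectors
   δ(X) ∈ {0,1}^edges, X ⊆ [n], of which there are 2^(n-1), and it is full-dimensional since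
   δ({i}) + δ({j}) - δ({i,j}) = 2 e_ij. For three cuts S1, S2, S3 let F(X) count the triples
   (i, j, k) on which (δ(X)_ij, δ(X)_ik) agrees with none of the pairs (δ(S_t)_ij, δ(S_t)_ik).
   Because δ_jk = δ_ij xor δ_ik, every boolean function of (δ_ij, δ_ik) is affine in
   (δ_ij, δ_ik, δ_jk), so F is an affine function of δ(X). It is nonnegative, vanishes at the S_t,
   and only there: agreement on (i, j, k) means that X Δ S_t is constant on {i, j, k}, and if no
   X Δ S_t were constant, four suitable points would yield a triple on which none of them is.
   Hence {F = 0} is a face with vertex set {δ(S1), δ(S2), δ(S3)}. *)

Section Faces.
Variables (R : realType) (d : nat).
Implicit Types (c x : 'rV[R]_d) (S T : seq 'rV[R]_d).

Lemma dotpDl c1 c2 x : dotp (c1 + c2) x = dotp c1 x + dotp c2 x.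
Proof. by rewrite /dotp -big_split; apply: eq_bigr => i _; rewrite mxE mulrDl. Qed.

Lemma dotpZl a c x : dotp (a *: c) x = a * dotp c x.
Proof. by rewrite /dotp mulr_sumr; apply: eq_bigr => i _; rewrite mxE mulrA. Qed.

Lemma dotp0l x : dotp 0 x = 0.
Proof. by rewrite /dotp big1 // => i _; rewrite mxE mul0r. Qed.

Lemma dotp_sumr m (l : 'I_m -> R) (v : 'I_m -> 'rV[R]_d) c :
  dotp c (\sum_i l i *: v i) = \sum_i l i * dotp c (v i).
Proof.
rewrite /dotp; under eq_bigr => k _ do rewrite summxE mulr_sumr.
rewrite exchange_big /=; apply: eq_bigr => i _; rewrite mulr_sumr.
by apply: eq_bigr => k _; rewrite mxE mulrCA.
Qed.

Lemma sum_ord_eq m (k : nat) : \sum_(i < m) ((k == i)%:R : R) = (k < m)%:R.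
Proof.
case: (ltnP k m) => hk.
  rewrite (bigD1 (Ordinal hk)) //= eqxx big1 ?addr0 // => i.
  by rewrite -val_eqE /= eq_sym => /negPf ->.
by rewrite big1 // => i _; rewrite gtn_eqF // (leq_trans (ltn_ord i) hk).
Qed.

(* The weight of S`_j is moved to the first occurrence of S`_j in T. *)
Lemma conv_support S T (l : 'I_(size S) -> R) :
  (forall j, 0 <= l j) -> \sum_j l j = 1 ->
  (forall j, l j != 0 -> S`_j \in T) ->
  conv T (\sum_j l j *: S`_j).
Proof.
move=> l_ge0 l_sum1 lT.
exists (fun i : 'I_(size T) => \sum_(j < size S) ((index S`_j T == i)%:R * l j)).
split; first by move=> i; apply: sumr_ge0 => j _; apply: mulr_ge0.
split.
  rewrite exchange_big /= -[RHS]l_sum1; apply: eq_bigr => j _.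
  rewrite -mulr_suml sum_ord_eq.
  case: (eqVneq (l j) 0) => [->|/lT hj]; first by rewrite mulr0.
  by rewrite index_mem hj mul1r.
apply: esym; under eq_bigr => i _ do rewrite scaler_suml.
rewrite exchange_big /=; apply: eq_bigr => j _.
case: (eqVneq (l j) 0) => [->|/lT hj].
  by rewrite scale0r big1 // => i _; rewrite mulr0 scale0r.
rewrite (bigD1 (Ordinal (etrans (index_mem _ _) hj))) //= eqxx mul1r nth_index //.
rewrite big1 ?addr0 // => i hi.
by rewrite eq_sym -val_eqE /= in hi; rewrite (negbTE hi) mul0r scale0r.
Qed.

Lemma face_conv_tight S T c b :
  (forall s, s \in S -> dotp c s <= b) ->
  (forall s, s \in S -> dotp c s = b -> s \in T) ->
  {subset T <= S} ->
  (forall t, t \in T -> dotp c t = b) ->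
  is_face (conv S) (conv T).
Proof.
move=> S_le S_tight sub_TS T_eq; exists c, b; split.
  move=> x [l [l_ge0 [l_sum1 ->]]]; rewrite dotp_sumr -[b]mul1r -l_sum1 mulr_suml.
  by apply: ler_sum => i _; rewrite ler_wpM2l // S_le // mem_nth.
move=> x; split.
  move=> [l [l_ge0 [l_sum1 ->]]]; split.
    by apply: conv_support => // j _; rewrite sub_TS // mem_nth.
  rewrite dotp_sumr; under eq_bigr => i _ do rewrite T_eq ?mem_nth //.
  by rewrite -mulr_suml l_sum1 mul1r.
move=> [[l [l_ge0 [l_sum1 ->]]] hx]; apply: conv_support => // j lj0.
have slack_sum : \sum_(i < size S) l i * (b - dotp c S`_i) = 0.
  under eq_bigr => i _ do rewrite mulrBr.
  by rewrite sumrB -mulr_suml l_sum1 mul1r -dotp_sumr hx subrr.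
have /eqP : l j * (b - dotp c S`_j) = 0.
  apply: (psumr_eq0P _ slack_sum) => // i _.
  by rewrite mulr_ge0 // subr_ge0 S_le // mem_nth.
rewrite mulf_eq0 (negbTE lj0) subr_eq0 => /eqP/esym.
by apply: S_tight; rewrite mem_nth.
Qed.

Lemma conv_seq1 p x : conv [:: p] x <-> x = p.
Proof.
split; first by move=> [l [_ [+ ->]]]; rewrite !big_ord1 /= => ->; rewrite scale1r.
move=> ->; exists (fun _ => 1); do !split => //; first by rewrite big_ord1.
by rewrite big_ord1 scale1r.
Qed.

Lemma eq_is_face (P F G : 'rV[R]_d -> Prop) :
  (forall x, F x <-> G x) -> is_face P F -> is_face P G.
Proof. by move=> FG [c [b [P_le Fx]]]; exists c, b; split => // x; rewrite -FG. Qed.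

(* A 0/1 point v is cut out of the cube by the linear form with coefficients 2 v_k - 1. *)
Lemma pt01_vertex (V : {set {ffun 'I_d -> bool}}) v : v \in V ->
  is_vertex (poly01 R V) (pt01 R v).
Proof.
move=> vV; apply: (@eq_is_face _ (conv [:: pt01 R v])) => [x|]; first exact: conv_seq1.
pose c := \row_k (2 * ((v k)%:R : R) - 1).
have dot_c w : dotp c (pt01 R w) = \sum_k (2 * ((v k)%:R : R) - 1) * (w k)%:R.
  by apply: eq_bigr => k _; rewrite !mxE.
have term_le (a b : bool) : (2 * (a%:R : R) - 1) * b%:R <= a%:R.
  by case: a; case: b => /=; lra.
apply: (@face_conv_tight (pts01 R V) _ c (\sum_k ((v k)%:R : R))).
- by move=> s /mapP [w _ ->]; rewrite dot_c; apply: ler_sum => k _.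
- move=> s /mapP [w _ ->]; rewrite dot_c => /eqP.
  rewrite eq_sym -subr_eq0 -sumrB => /eqP/psumr_eq0P slack0.
  suff -> : w = v by rewrite mem_seq1.
  apply/ffunP => k; move: (slack0 (fun i _ => etrans (subr_ge0 _ _) (term_le _ _)) k isT).
  by case: (v k); case: (w k) => //= h; exfalso; lra.
- by move=> t; rewrite mem_seq1 => /eqP ->; apply: map_f; rewrite mem_enum.
- move=> t; rewrite mem_seq1 => /eqP ->; rewrite dot_c.
  by apply: eq_bigr => k _; case: (v k) => /=; lra.
Qed.

End Faces.

Definition const3 (T : eqType) (x y z : T) := (x == y) && (x == z).

Lemma const3_cover_false (a1 a2 a3 b1 b2 b3 c1 c2 c3 d1 d2 d3 : bool) :
  b1 != a1 -> c2 != a2 -> d3 != a3 ->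
  [|| const3 a1 b1 c1, const3 a2 b2 c2 | const3 a3 b3 c3] ->
  [|| const3 a1 b1 d1, const3 a2 b2 d2 | const3 a3 b3 d3] ->
  [|| const3 a1 c1 d1, const3 a2 c2 d2 | const3 a3 c3 d3] ->
  [|| const3 b1 c1 d1, const3 b2 c2 d2 | const3 b3 c3 d3] -> False.
Proof.
move=> /negPf b1a1 /negPf c2a2 /negPf d3a3.
have {b1a1}-> : b1 = ~~ a1 by move: b1a1; case: b1; case: a1.
have {c2a2}-> : c2 = ~~ a2 by move: c2a2; case: c2; case: a2.
have {d3a3}-> : d3 = ~~ a3 by move: d3a3; case: d3; case: a3.
by case: a1; case: a2; case: a3; case: b2; case: b3;
   case: c1; case: c3; case: d1; case: d2.
Qed.

(* If no Y_t is constant, pick i0 and j_t with Y_t j_t != Y_t i0; the four points i0, j1, j2, j3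
   contradict const3_cover_false. *)
Lemma const3_cover_const (T : finType) (Y1 Y2 Y3 : T -> bool) :
  (forall i j k, [|| const3 (Y1 i) (Y1 j) (Y1 k), const3 (Y2 i) (Y2 j) (Y2 k)
                   | const3 (Y3 i) (Y3 j) (Y3 k)]) ->
  [\/ forall p q, Y1 p = Y1 q, forall p q, Y2 p = Y2 q | forall p q, Y3 p = Y3 q].
Proof.
move=> cover; have [i0 _|T0] := pickP (@predT T); last by constructor 1 => p; have := T0 p.
suff : [\/ forall p, Y1 p = Y1 i0, forall p, Y2 p = Y2 i0 | forall p, Y3 p = Y3 i0].
  by case=> Y_const; [apply: Or31|apply: Or32|apply: Or33] => p q; rewrite !Y_const.
have [Y1_const|/forallPn [j1 /= j1_ne]] := boolP [forall p, Y1 p == Y1 i0].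
  by apply: Or31 => p; apply/eqP; move/forallP: Y1_const.
have [Y2_const|/forallPn [j2 /= j2_ne]] := boolP [forall p, Y2 p == Y2 i0].
  by apply: Or32 => p; apply/eqP; move/forallP: Y2_const.
have [Y3_const|/forallPn [j3 /= j3_ne]] := boolP [forall p, Y3 p == Y3 i0].
  by apply: Or33 => p; apply/eqP; move/forallP: Y3_const.
have [] := const3_cover_false j1_ne j2_ne j3_ne
  (cover i0 j1 j2) (cover i0 j1 j3) (cover i0 j2 j3) (cover j1 j2 j3).
Qed.

Lemma exists_set2 (T : finType) (P : pred T) (i j : T) :
  [exists p in [set i; j], P p] = P i || P j.
Proof.
apply/existsP/orP => [[p /andP[]]|[Pi|Pj]]; last 2 first.
- by exists i; rewrite !inE eqxx.
- by exists j; rewrite !inE eqxx orbT.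
by rewrite !inE => /orP[]/eqP-> ?; [left|right].
Qed.

Lemma eq_set2 (T : finType) (p q i j : T) : p != q ->
  ([set p; q] == [set i; j]) = (p == i) && (q == j) || (p == j) && (q == i).
Proof.
move=> pq; apply/eqP/idP => [pq_ij|/orP[]/andP[/eqP-> /eqP->] //]; last exact: setUC.
have := set21 p q; have := set22 p q; rewrite pq_ij !inE.
move=> /orP[]/eqP q_eq /orP[]/eqP p_eq; rewrite q_eq p_eq ?eqxx ?orbT // in pq *.
all: by rewrite eqxx in pq.
Qed.

Section CutVectors.
Variable n : nat.
Implicit Types (X S : {set 'I_n}) (i j k : 'I_n).

(* The coordinates 'I_('C(n, 2)) of the cut vectors are identified with the edges of K_n. *)
Definition edges := [set A : {set 'I_n} | #|A| == 2%N].

Lemma card_edges : 'C(n, 2) = #|edges|.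
Proof. by rewrite card_draws card_ord. Qed.

Definition edge (e : 'I_('C(n, 2))) : {set 'I_n} := enum_val (cast_ord card_edges e).

Lemma edge_inj : injective edge.
Proof. by move=> e1 e2 /enum_val_inj /cast_ord_inj. Qed.

Lemma edgeP e : exists i j, i != j /\ edge e = [set i; j].
Proof. by have := enum_valP (cast_ord card_edges e); rewrite inE => /cards2P. Qed.

Lemma edge_of_pair i j : i != j -> exists e, edge e = [set i; j].
Proof.
move=> ij; have ij_edge : [set i; j] \in edges by rewrite inE cards2 ij.
exists (cast_ord (esym card_edges) (enum_rank_in ij_edge [set i; j])).
by rewrite /edge cast_ordKV enum_rankK_in.
Qed.

Definition crosses X (A : {set 'I_n}) : bool :=
  [exists p in A, p \in X] && [exists p in A, p \notin X].

Definition cut X i j : bool := (i \in X) (+) (j \in X).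

Lemma crosses_set2 X i j : crosses X [set i; j] = cut X i j.
Proof.
rewrite /crosses (exists_set2 (mem X)) (exists_set2 (predC (mem X))) /cut /=.
by case: (i \in X); case: (j \in X).
Qed.

Definition cutvec X : {ffun 'I_('C(n, 2)) -> bool} := [ffun e => crosses X (edge e)].

Lemma cutvec_edge X e i j : edge e = [set i; j] -> cutvec X e = cut X i j.
Proof. by move=> e_ij; rewrite ffunE e_ij crosses_set2. Qed.

Lemma eq_cutvec X Y : (forall i j, cut X i j = cut Y i j) -> cutvec X = cutvec Y.
Proof.
move=> XY; apply/ffunP => e; have [i [j [_ e_ij]]] := edgeP e.
by rewrite !(cutvec_edge _ e_ij).
Qed.

Definition cut_vertices : {set {ffun 'I_('C(n, 2)) -> bool}} := [set cutvec X | X in setT].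

End CutVectors.

Section CutAffine.
Variables (R : realType) (n : nat).

Definition cut_affine (F : {set 'I_n} -> R) :=
  exists (c : 'rV[R]_('C(n, 2))) (b : R), forall X, F X = dotp c (pt01 R (cutvec X)) + b.

Lemma eq_cut_affine F G : F =1 G -> cut_affine F -> cut_affine G.
Proof. by move=> FG [c [b Fcb]]; exists c, b => X; rewrite -FG. Qed.

Lemma cut_affine_const a : cut_affine (fun _ => a).
Proof. by exists 0, a => X; rewrite dotp0l add0r. Qed.

Lemma cut_affineD F G : cut_affine F -> cut_affine G -> cut_affine (fun X => F X + G X).
Proof.
move=> [c1 [b1 F1]] [c2 [b2 G2]]; exists (c1 + c2), (b1 + b2) => X.
by rewrite F1 G2 dotpDl; ring.
Qed.

Lemma cut_affineZ a F : cut_affine F -> cut_affine (fun X => a * F X).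
Proof. by move=> [c [b Fcb]]; exists (a *: c), (a * b) => X; rewrite Fcb dotpZl mulrDr. Qed.

Lemma cut_affine_sum (I : finType) (F : I -> {set 'I_n} -> R) :
  (forall t, cut_affine (F t)) -> cut_affine (fun X => \sum_t F t X).
Proof.
move=> F_aff; elim: (index_enum I) => [|t r IH].
  by apply: eq_cut_affine (cut_affine_const 0) => X; rewrite big_nil.
by apply: eq_cut_affine (cut_affineD (F_aff t) IH) => X; rewrite big_cons.
Qed.

Lemma cut_affine_cut i j : cut_affine (fun X => (cut X i j)%:R).
Proof.
have [<-|ij] := eqVneq i j.
  by apply: eq_cut_affine (cut_affine_const 0) => X; rewrite /cut addbb.
have [e0 e0_ij] := edge_of_pair ij.
exists (\row_e ((e == e0)%:R)), 0 => X.
rewrite addr0 /dotp (bigD1 e0) //= big1 => [|e e_ne]; last by rewrite mxE (negbTE e_ne) mul0r.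
by rewrite addr0 !mxE eqxx mul1r (cutvec_edge _ e0_ij).
Qed.

(* g z w is a polynomial of degree 2 in (z, w), and z w = (z + w - cut X j k) / 2
   because cut X j k = z (+) w. *)
Lemma cut_affine_pair (g : bool -> bool -> bool) i j k :
  cut_affine (fun X => (g (cut X i j) (cut X i k))%:R).
Proof.
pose gR z w : R := (g z w)%:R.
have prod_aff : cut_affine (fun X => 2^-1 * ((cut X i j)%:R + (cut X i k)%:R - (cut X j k)%:R)).
  apply/cut_affineZ/cut_affineD; first exact: cut_affineD (cut_affine_cut _ _) (cut_affine_cut _ _).
  by apply: eq_cut_affine (cut_affineZ (-1) (cut_affine_cut j k)) => X; rewrite mulN1r.
have := cut_affineD (cut_affineD (cut_affineD (cut_affine_const (gR false false))
   (cut_affineZ (gR true false - gR false false) (cut_affine_cut i j)))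
   (cut_affineZ (gR false true - gR false false) (cut_affine_cut i k)))
   (cut_affineZ (gR true true - gR true false - gR false true + gR false false) prod_aff).
apply: eq_cut_affine => X /=.
have -> : cut X j k = cut X i j (+) cut X i k.
  by rewrite /cut; case: (i \in X); case: (j \in X); case: (k \in X).
by rewrite /gR; case: (cut X i j); case: (cut X i k) => /=; field.
Qed.

End CutAffine.

Lemma psumr3_eq0P (R : numDomainType) (I : finType) (F : I -> I -> I -> R) :
  (forall i j k, 0 <= F i j k) -> \sum_i \sum_j \sum_k F i j k = 0 ->
  forall i j k, F i j k = 0.
Proof.
move=> F_ge0 F_sum0 i j k.
have sum_jk0 : \sum_j \sum_k F i j k = 0.
  by apply: (psumr_eq0P _ F_sum0) => // i' _; do 2!(apply: sumr_ge0 => ? _).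
have sum_k0 : \sum_k F i j k = 0.
  by apply: (psumr_eq0P _ sum_jk0) => // j' _; apply: sumr_ge0.
exact: (psumr_eq0P _ sum_k0).
Qed.

Section CutTriangle.
Variables (R : realType) (n : nat) (S1 S2 S3 : {set 'I_n}).

Definition missed (i j k : 'I_n) (z w : bool) :=
  ~~ [|| (z == cut S1 i j) && (w == cut S1 i k), (z == cut S2 i j) && (w == cut S2 i k)
       | (z == cut S3 i j) && (w == cut S3 i k)].

Definition defect (X : {set 'I_n}) : R :=
  \sum_i \sum_j \sum_k (missed i j k (cut X i j) (cut X i k))%:R.

Lemma cut_affine_defect : cut_affine defect.
Proof. by do 3!(apply: cut_affine_sum => ?); apply: cut_affine_pair. Qed.

Lemma defect_ge0 (X : {set 'I_n}) : 0 <= defect X.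
Proof. by do 3!(apply: sumr_ge0 => ? _). Qed.

Lemma defect_eq0 (X : {set 'I_n}) : X \in [:: S1; S2; S3] -> defect X = 0.
Proof.
rewrite !inE => /or3P XS; do 3!(apply: big1 => ? _); rewrite /missed.
by case: XS => /eqP ->; rewrite !eqxx ?orbT.
Qed.

Lemma eq_cut_const3 (S X : {set 'I_n}) (i j k : 'I_n) :
  (cut X i j == cut S i j) && (cut X i k == cut S i k) =
  const3 ((i \in X) (+) (i \in S)) ((j \in X) (+) (j \in S)) ((k \in X) (+) (k \in S)).
Proof.
rewrite /const3 /cut.
by case: (i \in X); case: (i \in S); case: (j \in X); case: (j \in S);
   case: (k \in X); case: (k \in S).
Qed.

Lemma cutvec_symdiff_const (S X : {set 'I_n}) :
  (forall p q, (p \in X) (+) (p \in S) = (q \in X) (+) (q \in S)) -> cutvec X = cutvec S.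
Proof.
move=> XS_const; apply: eq_cutvec => i j; move: (XS_const i j); rewrite /cut.
by case: (i \in X); case: (i \in S); case: (j \in X); case: (j \in S).
Qed.

Lemma defect_eq0_cutvec (X : {set 'I_n}) : defect X = 0 ->
  cutvec X \in [:: cutvec S1; cutvec S2; cutvec S3].
Proof.
move=> defect0.
pose Z (S : {set 'I_n}) p := (p \in X) (+) (p \in S).
have cover i j k : [|| const3 (Z S1 i) (Z S1 j) (Z S1 k), const3 (Z S2 i) (Z S2 j) (Z S2 k)
                     | const3 (Z S3 i) (Z S3 j) (Z S3 k)].
  rewrite -!eq_cut_const3.
  have := psumr3_eq0P (fun i j k => ler0n _ _) defect0 i j k.
  by rewrite /missed; case: [|| _, _ | _] => //= /eqP; rewrite oner_eq0.
by case: (const3_cover_const cover) => /cutvec_symdiff_const ->; rewrite !inE eqxx ?orbT.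
Qed.

Lemma cut_triangle_face :
  is_face (poly01 R (cut_vertices n))
    (conv [:: pt01 R (cutvec S1); pt01 R (cutvec S2); pt01 R (cutvec S3)]).
Proof.
have [c [b defectE]] := cut_affineZ (-1) cut_affine_defect.
have dot_c X : dotp c (pt01 R (cutvec X)) = - defect X - b by rewrite -mulN1r defectE addrK.
apply: (@face_conv_tight _ _ (pts01 R (cut_vertices n)) _ c (- b)).
- move=> s /mapP [x]; rewrite mem_enum => /imsetP [X _ ->] ->.
  by rewrite dot_c lerBlDr addrC subrr oppr_le0 defect_ge0.
- move=> s /mapP [x]; rewrite mem_enum => /imsetP [X _ ->] -> /eqP.
  rewrite dot_c subr_eq addNr oppr_eq0 => /eqP/defect_eq0_cutvec.
  by rewrite !inE => /or3P [] /eqP ->; rewrite eqxx ?orbT.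
- move=> t; rewrite !inE => /or3P [] /eqP ->; apply: map_f; rewrite mem_enum;
  apply/imsetP; [exists S1|exists S2|exists S3] => //.
- move=> t; rewrite !inE => /or3P [] /eqP ->;
  by rewrite dot_c defect_eq0 ?oppr0 ?sub0r // !inE eqxx ?orbT.
Qed.

End CutTriangle.

(* With a = (p == i), b = (q == i), c = (p == j), e = (q == j) for p != q and i != j, the left side
   is the indicator of [set p; q] = [set i; j] and the right side is read off three cut vectors. *)
Lemma pair_indicatorE (R : numFieldType) (a b c e : bool) :
  ~~ (a && b) -> ~~ (c && e) -> ~~ (a && c) -> ~~ (b && e) ->
  ((a && e || c && b)%:R : R) =
    2^-1 * ((a (+) b)%:R + (c (+) e)%:R - ((a || c) (+) (b || e))%:R).
Proof. by case: a; case: b; case: c; case: e => //= *; field. Qed.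

Section CutDimension.
Variables (R : realType) (n : nat).

Lemma pt01_cutvec0 : pt01 R (cutvec (set0 : {set 'I_n})) = 0.
Proof.
apply/rowP => e; rewrite !mxE ffunE /crosses.
suff -> : [exists p in edge e, p \in set0] = false by [].
by apply/negbTE/existsPn => p; rewrite inE andbF.
Qed.

Lemma delta_mx_cutvec (e : 'I_('C(n, 2))) i j : i != j -> edge e = [set i; j] ->
  delta_mx 0 e = 2^-1 *: (pt01 R (cutvec [set i]) + pt01 R (cutvec [set j])
                          - pt01 R (cutvec [set i; j])).
Proof.
move=> ij e_ij; apply/rowP => e'; rewrite !mxE.
have [p [q [pq e'_pq]]] := edgeP e'.
rewrite !(cutvec_edge _ e'_pq) /cut -(inj_eq (@edge_inj n)) e_ij e'_pq eq_set2 // !inE.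
by apply: pair_indicatorE; apply/negP => /andP [/eqP p_eq /eqP q_eq];
  [move: pq|move: pq|move: ij|move: ij]; rewrite ?p_eq ?q_eq -?p_eq -?q_eq eqxx.
Qed.

Lemma aff_dim_cut_vertices : aff_dim (pts01 R (cut_vertices n)) = 'C(n, 2).
Proof.
rewrite /aff_dim; set S := pts01 R _; set M := \matrix_(i < size S) (S`_i - S`_0).
have row_M s : s \in S -> (s - S`_0 <= M)%MS.
  move=> sS; have s_idx : (index s S < size S)%N by rewrite index_mem.
  by have := row_sub (Ordinal s_idx) M; rewrite rowK /= nth_index.
have cutvecS X : pt01 R (cutvec X) \in S.
  by apply: map_f; rewrite mem_enum; apply/imsetP; exists X.
have S0_M : (S`_0 <= M)%MS.
  by have := row_M _ (cutvecS set0); rewrite pt01_cutvec0 sub0r eqmx_opp.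
have cutvec_M X : (pt01 R (cutvec X) <= M)%MS.
  by have := addmx_sub (row_M _ (cutvecS X)) S0_M; rewrite subrK.
apply/eqP; rewrite eqn_leq rank_leq_col /= -{1}(mxrank1 R 'C(n, 2)); apply: mxrankS.
apply/row_subP => e; rewrite row1; have [i [j [ij e_ij]]] := edgeP e.
rewrite (delta_mx_cutvec ij e_ij); apply/scalemx_sub/addmx_sub; first exact: addmx_sub.
by rewrite eqmx_opp.
Qed.

End CutDimension.

(* The cut vectors of the sets avoiding the vertex 0 are pairwise distinct. *)
Lemma card_cut_vertices n : (2 ^ n <= #|cut_vertices n.+1|)%N.
Proof.
have sub : [set cutvec X | X in powerset [set~ ord0]] \subset cut_vertices n.+1.
  by apply/subsetP => x /imsetP [X _ ->]; apply/imsetP; exists X.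
apply: leq_trans (subset_leq_card sub).
rewrite card_in_imset ?card_powerset ?cardsC1 ?card_ord //.
move=> X Y; rewrite !powersetE => /subsetP X0 /subsetP Y0 XY; apply/setP => p.
have /negPf X0F : ord0 \notin X by apply/negP => /X0; rewrite !inE eqxx.
have /negPf Y0F : ord0 \notin Y by apply/negP => /Y0; rewrite !inE eqxx.
have [<-|p0] := eqVneq ord0 p; first by rewrite X0F Y0F.
have [e e_0p] := edge_of_pair p0.
have := congr1 (fun f : {ffun _ -> bool} => f e) XY.
by rewrite /= !(cutvec_edge _ e_0p) /cut X0F Y0F.
Qed.

Lemma bin2_mul2 m : ('C(m, 2) * 2 = m * m.-1)%N.
Proof.
rewrite bin2 -divn2 divnK // dvdn2 oddM.
by case: m => //= m; rewrite andNb.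
Qed.

(* Because sqrt((m + 1) m) < m + 1/2. *)
Lemma powR2_sqrt_bin2_lt (R : realType) m :
  (2 : R) `^ (Num.sqrt (2 * ('C(m.+1, 2))%:R) - 2^-1) < (2 ^ m)%:R.
Proof.
have -> : (2 * ('C(m.+1, 2))%:R : R) = m.+1%:R * m%:R.
  by apply/eqP; rewrite -!natrM eqr_nat mulnC bin2_mul2.
set M : R := m%:R; have M_ge0 : 0 <= M by rewrite /M ler0n.
have sqrt_lt : Num.sqrt (m.+1%:R * M) < M + 2^-1.
  rewrite -[X in _ < X](@ger0_norm _ (M + 2^-1)); last by lra.
  rewrite -sqrtr_sqr ltr_sqrt; last by rewrite exprn_gt0 //; lra.
  by rewrite -natr1 -/M; nra.
rewrite natrX -powR_mulrn ?ler0n // /powR pnatr_eq0 /= ltr_expR ltr_pM2r.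
  by rewrite -/M; lra.
by apply: ln_gt0; lra.
Qed.

Theorem mainTheorem14 (R : realType) (n d : nat) (hn : (3 <= n)%N)
    (hd : d = 'C(n, 2)) :
  exists V : {set {ffun 'I_d -> bool}},
    (* conv V is d-dimensional *)
    (0 < #|V|)%N /\ aff_dim (pts01 R V) = d /\
    (* every point of V is a vertex of conv V (so V is its vertex set) *)
    (forall v, v \in V -> is_vertex (poly01 R V) (pt01 R v)) /\
    (* 3-neighborly: any three distinct vertices span a (triangular) face *)
    (forall u v w, u \in V -> v \in V -> w \in V ->
       u != v -> u != w -> v != w ->
       is_face (poly01 R V) (conv [:: pt01 R u; pt01 R v; pt01 R w])) /\
    (* more than 2^(sqrt(2d) - 1/2) vertices *)
    (2 : R) `^ (Num.sqrt (2 * d%:R) - 2^-1) < (#|V|)%:R.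
Proof.
subst d; case: n hn => [//|m] _; have card_V := card_cut_vertices m.
exists (cut_vertices m.+1); split; first by rewrite (leq_trans _ card_V) // expn_gt0.
split; first exact: aff_dim_cut_vertices.
split; first by move=> v; apply: pt01_vertex.
split.
  move=> u v w /imsetP[S1 _ ->] /imsetP[S2 _ ->] /imsetP[S3 _ ->] _ _ _.
  exact: cut_triangle_face.
by apply: lt_le_trans (powR2_sqrt_bin2_lt R m) _; rewrite ler_nat.
Qed.
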